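(* Let $q$ be a prime power, $m$ odd, $3\le n\le m$, let $g_1,\dots,g_n\in\mathbb{F}_{q^m}$ be linearly independent over $\mathbb{F}_q$, and let $\mathcal{G}$ be the Gabidulin code of dimension $k=1$ with respect to $g_1,\dots,g_n$. Let $f(x)=x^{q^2}+cx$ with $c\in\mathbb{F}_{q^m}$. Then $\sigma_f=(f(g_1),\dots,f(g_n))$ is a deep hole of $\mathcal{G}$ in the rank metric, i.e. $d_R(\sigma_f,\mathcal{G})=n-1$.
   Context: $\mathcal{L}_q(x,\mathbb{F}_{q^m})$ is the set of $q$-linearized polynomials $\sum_i a_ix^{q^i}$ with $a_i\in\mathbb{F}_{q^m}$, $q$-degree being the largest $i$ with $a_i\ne0$. Rank distance: $d_R(\mathbf{u},\mathbf{v})=\dim_{\mathbb{F}_q}\langle u_1-v_1,\dots,u_n-v_n\rangle$, $d_R(\mathbf{u},C)=\min_{\mathbf{c}\in C}d_R(\mathbf{u},\mathbf{c})$; a deep hole is a word attaining the covering radius $\max_{\mathbf{u}}d_R(\mathbf{u},C)$, which for $\mathcal{G}$ is $n-k$. The Gabidulin code of dimension $k$ is $\mathcal{G}=\{(v(g_1),\dots,v(g_n)) : v\in\mathcal{L}_q(x,\mathbb{F}_{q^m}),\ v=0\text{ or }\deg_q(v)<k\}$; for $k=1$ this is $\{(\lambda g_1,\dots,\lambda g_n):\lambda\in\mathbb{F}_{q^m}\}$. *)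

(* F_q is modelled by a finite field F (q := #|F|, automatically
   a prime power) and F_{q^m} by a field extension L of F with \dim {:L} = m. *)
From HB Require Import structures.
From mathcomp Require Import all_boot all_order all_algebra all_field.
Set Implicit Arguments. Unset Strict Implicit. Unset Printing Implicit Defensive.
Import GRing.Theory.
Local Open Scope ring_scope.

Definition rank_dist (F : finFieldType) (L : fieldExtType F) (n : nat)
  (u v : 'I_n -> L) : nat :=
  \dim <<[seq u i - v i | i : 'I_n]>>%VS.

(* Gabidulin code of dimension k w.r.t. g: words (v(g_1),...,v(g_n)) with
   v = sum_{j<k} a_j x^{q^j} a q-linearized polynomial (v = 0 or deg_q v < k). *)
Definition in_gabidulin (F : finFieldType) (L : fieldExtType F) (n k : nat)
  (g : 'I_n -> L) (u : 'I_n -> L) : Prop :=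
  exists a : 'I_k -> L,
    forall i : 'I_n, u i = \sum_(j < k) a j * g i ^+ (#|F| ^ j)%N.

Definition rank_dist_code (F : finFieldType) (L : fieldExtType F) (n : nat)
  (C : ('I_n -> L) -> Prop) (u : 'I_n -> L) (d : nat) : Prop :=
  (exists2 c, C c & rank_dist u c = d) /\
  (forall c, C c -> (d <= rank_dist u c)%N).

From HB Require Import structures.
From mathcomp Require Import all_boot all_order all_algebra all_field.
Set Implicit Arguments.
Unset Strict Implicit.
Unset Printing Implicit Defensive.
Import GRing.Theory.
Local Open Scope ring_scope.

(** The difference between [sigma_f] and the codeword [(a g_1, ..., a g_n)] is
    the image of [g] under the F-linear map [x |-> x^(q^2) + (c - a) x], so its
    rank distance is [n - dim (U :&: ker)] with [U] the span of the [g_i].  Two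
    nonzero roots [x, y] of [x^(q^k) + mu x] have a ratio fixed by [z |-> z^(q^k)];
    since [z^(q^m) = z] on [F_(q^m)] and [gcd k m = 1], the ratio is fixed by
    [z |-> z^q], i.e. lies in [F_q].  Hence the kernel is at most a line, and it
    is exactly the line through [g_1] for [mu = - g_1^(q^2 - 1)]. *)

Lemma expr_pow_fixed_iter (R : pzSemiRingType) (p j i : nat) (z : R) :
  z ^+ (p ^ j) = z -> z ^+ (p ^ (j * i)) = z.
Proof.
move=> zj; elim: i => [|i IHi]; first by rewrite muln0 expr1.
by rewrite mulnS expnD exprM zj IHi.
Qed.

Section LinearizedBinomial.
Variables (F : finFieldType) (L : fieldExtType F).
Local Notation q := #|F|.

Lemma card_pnat_pchar : [pchar L].-nat q.
Proof.
have [p pr_p charFp] := finPcharP F.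
have charLp : p \in [pchar L] by rewrite (pchar_lalg L).
rewrite (eq_pnat _ (pcharf_eq charLp)).
by have /= -> := card_pprimeChar charFp; rewrite pnatX pnat_id.
Qed.

Lemma expr_card_scale (k : nat) (a : F) (x : L) :
  (a *: x) ^+ (q ^ k) = a *: x ^+ (q ^ k).
Proof.
have a_fixed : a ^+ (q ^ (1 * k)) = a.
  by apply: expr_pow_fixed_iter; exact: expf_card.
rewrite -[a *: x]mulr_algl exprMn -in_algE -rmorphXn /= mulr_algl.
by rewrite -[k]mul1n a_fixed.
Qed.

Definition linbinom (k : nat) (mu x : L) : L := x ^+ (q ^ k) + mu * x.

Lemma linbinom_is_linear k mu : linear (linbinom k mu).
Proof.
move=> a x y; rewrite /linbinom.
have q_pchar : [pchar L].-nat (q ^ k)%N by rewrite pnatX card_pnat_pchar.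
rewrite (exprDn_pchar _ _ q_pchar) expr_card_scale mulrDr -scalerAr.
by rewrite scalerDr addrACA.
Qed.

HB.instance Definition _ k mu :=
  GRing.isLinear.Build F L L *:%R (linbinom k mu) (linbinom_is_linear k mu).

Lemma expr_card_fixed_mem1 (k : nat) (z : L) :
  coprime k (\dim {:L}) -> z ^+ (q ^ k) = z -> z \in 1%VS.
Proof.
move=> co_k zk; set m := \dim {:L}.
have zm : z ^+ (q ^ m) = z.
  by apply/eqP; rewrite -(Fermat's_little_theorem {:L}%AS) memvf.
(* Bezout: [1 + a k = b m], so [z^q = z^(q^(1 + a k)) = z^(q^(b m)) = z]. *)
have [a _ /dvdnP[b Eb]] := Bezoutl k (adim_gt0 {:L}%AS).
rewrite coprime_sym in co_k; rewrite (eqnP co_k) in Eb.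
rewrite (Fermat's_little_theorem 1%AS) dimv1 expn1; apply/eqP.
rewrite -{2}(expr_pow_fixed_iter b zm) mulnC -Eb expnD expn1 exprM exprAC.
by rewrite mulnC (expr_pow_fixed_iter a zk).
Qed.

Lemma linbinom_root_ratio (k : nat) (mu x y : L) :
  coprime k (\dim {:L}) -> x != 0 ->
  linbinom k mu x = 0 -> linbinom k mu y = 0 -> y / x \in 1%VS.
Proof.
move=> co_k nz_x /eqP x_root /eqP y_root.
rewrite /linbinom !addr_eq0 -!mulNr in x_root y_root.
have nz_mu : - mu != 0.
  by apply: contraTneq x_root => ->; rewrite mul0r expf_eq0 (negPf nz_x) andbF.
apply: (expr_card_fixed_mem1 co_k).
rewrite exprMn exprVn (eqP x_root) (eqP y_root) invfM.
by rewrite mulrACA mulfV // mul1r.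
Qed.

Lemma dim_lker_linbinom (k : nat) (mu : L) :
  coprime k (\dim {:L}) -> (\dim (lker (linfun (linbinom k mu))) <= 1)%N.
Proof.
move=> co_k; set K := lker _.
have [->|nzK] := eqVneq K 0%VS; first by rewrite dimv0.
have nz_x : vpick K != 0 by rewrite vpick0.
have x_root : linbinom k mu (vpick K) = 0.
  by have := memv_pick K; rewrite memv_ker lfunE => /eqP.
have <- : \dim <[vpick K]> = 1%N by rewrite dim_vline nz_x.
apply/dimvS/subvP=> y.
rewrite memv_ker lfunE => /eqP y_root.
rewrite -(divfK nz_x y) -[<[_]>%VS]prod1v memv_mul ?memv_line //.
exact: linbinom_root_ratio co_k nz_x x_root y_root.
Qed.

Lemma in_gabidulin1P (n : nat) (g u : 'I_n -> L) :
  in_gabidulin 1 g u <-> exists a, forall i, u i = a * g i.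
Proof.
split=> [[a Ea]|[a Ea]].
  by exists (a ord0) => i; rewrite Ea big_ord1 expn0 expr1.
by exists (fun=> a) => i; rewrite Ea big_ord1 expn0 expr1.
Qed.

Lemma rank_dist_linbinom (n k : nat) (g u : 'I_n -> L) (c a : L) :
  free [seq g i | i : 'I_n] -> (forall i, u i = a * g i) ->
  rank_dist (fun i => g i ^+ (q ^ k) + c * g i) u =
  (n - \dim (<<[seq g i | i : 'I_n]>> :&: lker (linfun (linbinom k (c - a)))))%N.
Proof.
move=> /eqP free_g Eu; rewrite /rank_dist.
set f := linfun _; set X := [seq g i | i : 'I_n].
have -> : [seq g i ^+ (q ^ k) + c * g i - u i | i : 'I_n] = map f X.
  rewrite -map_comp; apply: eq_map => i /=.
  by rewrite lfunE /= /linbinom Eu mulrBl addrA.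
have := limg_ker_dim f <<X>>; rewrite free_g size_map size_enum_ord => <-.
by rewrite limg_span addKn.
Qed.

End LinearizedBinomial.

Theorem proposition6 (F : finFieldType) (L : fieldExtType F) (m n : nat)
  (g : 'I_n -> L) (c : L) :
  \dim {:L} = m -> odd m -> (3 <= n)%N -> (n <= m)%N ->
  free [seq g i | i : 'I_n] ->
  rank_dist_code (in_gabidulin 1 g)
    (fun i : 'I_n => g i ^+ (#|F| ^ 2)%N + c * g i) n.-1.
Proof.
move=> dimL odd_m n_ge3 _ free_g.
have co_2 : coprime 2 (\dim {:L}) by rewrite dimL coprime2n.
set U := <<[seq g i | i : 'I_n]>>%VS.
have dim_cap_le1 mu : (\dim (U :&: lker (linfun (linbinom 2 mu))) <= 1)%N.
  exact: leq_trans (dimvS (capvSr _ _)) (dim_lker_linbinom mu co_2).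
split=> [|u /in_gabidulin1P[a Eu]]; last first.
  by rewrite (rank_dist_linbinom 2 c free_g Eu) -subn1 leq_sub2l.
pose g0 := g (Ordinal (ltnW (ltnW n_ge3))).
have g0_in_g : g0 \in [seq g i | i : 'I_n] by rewrite map_f ?mem_enum.
have nz_g0 : g0 != 0 := free_not0 free_g g0_in_g.
pose mu := - (g0 ^+ (#|F| ^ 2) / g0).
exists (fun i => (c - mu) * g i); first by apply/in_gabidulin1P; exists (c - mu).
rewrite (rank_dist_linbinom 2 c free_g (fun=> erefl)) opprB addrC subrK -subn1.
have g0_cap : (<[g0]> <= U :&: lker (linfun (linbinom 2 mu)))%VS.
  rewrite subv_cap -!memvE memv_span //=.
  by rewrite memv_ker lfunE /= /linbinom /mu mulNr divfK ?subrr.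
congr (_ - _)%N; apply/eqP; rewrite eqn_leq dim_cap_le1 /=.
by apply: leq_trans (dimvS g0_cap); rewrite dim_vline nz_g0.
Qed.
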